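(* In the setup of the context, let $B=(b_i)_{i=1}^n$ and $B'=(b'_i)_{i=1}^n$ be two $\ast$-symmetric bases of $H$ with $b'_i=\sum_jA_{ij}b_j$, and let $J$, $J'$ be the asymptotic algebras built from $B$ and $B'$ (bases $(t_i)$, $(t'_i)$, traces $\bar\tau,\bar\tau'$). Then $A\in O_n(\mathcal O)$, and the $F$-linear map $\alpha:J\to J'$, $\alpha(t_x):=\sum_i\bar A_{ix}t'_i$ (with $\bar A$ the reduction of $A$ modulo $\mathfrak m$) satisfies: (a) $\alpha$ is an isomorphism of $F$-algebras; (b) $\bar\tau'\circ\alpha=\bar\tau$; (c) $\alpha(u^\ast)=\alpha(u)^\ast$ for all $u\in J$.
   Context: Setup: $\Gamma$ totally ordered abelian group; $K$ field with surjective valuation $\nu$, valuation ring $\mathcal O$, maximal ideal $\mathfrak m$, formally real residue field $F$. $H$ finite-dimensional split semisimple symmetric $K$-algebra with trace form $\tau$ and $K$-linear involutive antiautomorphism $\ast$; a $\ast$-symmetric basis is a basis $B$ with $B^\ast=B$ and $\tau(bc^\ast)=\delta_{bc}$. With $\Lambda$, $\chi_\lambda$, $c_\lambda$ ($\tau=\sum c_\lambda^{-1}\chi_\lambda$), $a_\lambda=-\tfrac12\nu(c_\lambda)\in\Gamma$, a fixed homomorphism $\gamma\mapsto v^\gamma$ from $\langle a_\lambda\rangle$ to $K^\times$ with $\nu(v^\gamma)=\gamma$, $f_\lambda=v^{2a_\lambda}c_\lambda$, and balanced representations $\rho_\lambda$ (irreducible of type $\lambda$ with $\nu(\rho_\lambda(b))\ge-a_\lambda$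 on every $\ast$-symmetric basis) with leading coefficients $c^\lambda(x)=v^{a_\lambda}\rho_\lambda(x)\bmod\mathfrak m$, the asymptotic algebra of a $\ast$-symmetric basis $B$ is the $F$-algebra $J$ with basis $(t_x)_{x\in B}$, product $t_xt_y=\sum_z\gamma_{x,y,z}t_{z^\ast}$ where $\gamma_{x,y,z}=\sum_\lambda\sum_{\mathfrak{s,t,u}}f_\lambda^{-1}c^\lambda(x)_{\mathfrak{st}}c^\lambda(y)_{\mathfrak{tu}}c^\lambda(z)_{\mathfrak{us}}$, trace form $\bar\tau(t_x)=n_x:=\sum_\lambda\sum_{\mathfrak s}f_\lambda^{-1}c^\lambda(x^\ast)_{\mathfrak{ss}}$, and involution $t_x^\ast=t_{x^\ast}$. *)

From HB Require Import structures.
From mathcomp Require Import all_boot all_order all_algebra all_field.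
Set Implicit Arguments. Unset Strict Implicit. Unset Printing Implicit Defensive.
Import Order.TTheory GRing.Theory Num.Theory.
Local Open Scope ring_scope.

Definition ordered_group (G : porderZmodType) : Prop :=
  (forall x y : G, (x <= y) || (y <= x)) /\
  (forall x y z : G, x <= y -> x + z <= y + z).

(* ---------- valuations: nu is only meaningful on nonzero elements; nu(0) = oo ---------- *)
Section Valuation.
Variables (G : porderZmodType) (K F : fieldType) (nu : K -> G).

Definition valuation : Prop :=
  (forall x y : K, x != 0 -> y != 0 -> nu (x * y) = nu x + nu y) /\
  (forall x y : K, x != 0 -> y != 0 -> x + y != 0 ->
      (nu x <= nu (x + y)) || (nu y <= nu (x + y))) /\
  (forall g : G, exists x : K, x != 0 /\ nu x = g).

(* "nu(x) >= g", with the convention nu(0) = +oo *)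
Definition vge (x : K) (g : G) : bool := (x == 0) || (g <= nu x).
Definition inO (x : K) : bool := vge x 0.
Definition inm (x : K) : bool := (x == 0) || (0 < nu x).

(* res : K -> F restricted to O is a surjective ring morphism with kernel m,
   i.e. F is (identified with) the residue field O/m *)
Definition residue_map (res : K -> F) : Prop :=
  (forall x y, inO x -> inO y -> res (x + y) = res x + res y) /\
  (forall x y, inO x -> inO y -> res (x * y) = res x * res y) /\
  res 1 = 1 /\
  (forall x, inO x -> (res x == 0) = inm x) /\
  (forall z : F, exists x, inO x /\ res x = z).
End Valuation.

Definition formally_real (F : fieldType) : Prop :=
  forall (k : nat) (s : 'I_k -> F), \sum_(i < k) s i ^+ 2 != -1.

Section Alg.
Variables (K : fieldType) (H : falgType K).

Definition trace_form (tau : H -> K) : Prop :=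
  (forall (k : K) (x y : H), tau (k *: x + y) = k * tau x + tau y) /\
  (forall x y : H, tau (x * y) = tau (y * x)) /\
  (forall x : H, (forall y : H, tau (x * y) = 0) -> x = 0).

Definition involution (star : H -> H) : Prop :=
  (forall (k : K) (x y : H), star (k *: x + y) = k *: star x + star y) /\
  (forall x y : H, star (x * y) = star y * star x) /\
  (forall x : H, star (star x) = x).

Definition star_sym_basis (tau : H -> K) (star : H -> H) (m : nat)
    (C : m.-tuple H) : Prop :=
  basis_of fullv C /\
  (forall i : 'I_m, star (tnth C i) \in C) /\
  (forall i j : 'I_m, tau (tnth C i * star (tnth C j)) = (i == j)%:R).

Variables (L : finType) (d : L -> nat).

(* the rho l are representations, and together they give an isomorphism
   H ~= prod_l M_{d l}(K); i.e. H is split semisimple and (rho l)_l is a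
   complete list of its irreducible representations, rho l of type l. *)
Definition split_semisimple_irreps (rho : forall l : L, H -> 'M[K]_(d l)) : Prop :=
  (forall l, forall (k : K) (x y : H), rho l (k *: x + y) = k *: rho l x + rho l y) /\
  (forall l (x y : H), rho l (x * y) = rho l x *m rho l y) /\
  (forall l, rho l 1 = 1%:M) /\
  (forall x y : H, (forall l, rho l x = rho l y) -> x = y) /\
  (forall M : forall l : L, 'M[K]_(d l), exists x : H, forall l, rho l x = M l).
End Alg.

Section Balanced.
Variables (G : porderZmodType) (K F : fieldType) (H : falgType K).
Variables (L : finType) (d : L -> nat) (nu : K -> G).

Definition in_agen (a : L -> G) (g : G) : Prop :=
  exists z : L -> int, g = \sum_(l : L) a l *~ z l.

Definition vhom (a : L -> G) (v : G -> K) : Prop :=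
  (forall g h, in_agen a g -> in_agen a h -> v (g + h) = v g * v h) /\
  (forall g, in_agen a g -> v g != 0 /\ nu (v g) = g).

Definition balanced (tau : H -> K) (star : H -> H)
    (rho : forall l : L, H -> 'M[K]_(d l)) (a : L -> G) : Prop :=
  forall l (m : nat) (C : m.-tuple H), star_sym_basis tau star C ->
    forall (i : 'I_m) (s t : 'I_(d l)), vge nu (rho l (tnth C i) s t) (- a l).
End Balanced.

(* J is modelled on its coordinate space 'rV[F]_n w.r.t. the basis (t_x):
   u = \sum_x u 0 x t_x. *)
Section Asymptotic.
Variables (G : porderZmodType) (K F : fieldType) (H : falgType K).
Variables (L : finType) (d : L -> nat).
Variables (res : K -> F) (v : G -> K) (a : L -> G) (c : L -> K).
Variables (rho : forall l : L, H -> 'M[K]_(d l)) (star : H -> H).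

Definition fl (l : L) : K := v (a l *+ 2) * c l.
Definition lc (l : L) (x : H) : 'M[F]_(d l) := map_mx res (v (a l) *: rho l x).

Variables (n : nat) (B : n.-tuple H).
Definition sidx (i : 'I_n) : 'I_n :=
  odflt i [pick j : 'I_n | tnth B j == star (tnth B i)].

Definition gam (x y z : 'I_n) : F :=
  \sum_(l : L) \sum_(s < d l) \sum_(t < d l) \sum_(u < d l)
     (res (fl l))^-1 * lc l (tnth B x) s t * lc l (tnth B y) t u
       * lc l (tnth B z) u s.

(* t_x t_y = \sum_z gam x y z t_{z^*}, extended bilinearly *)
Definition Jmul (p q : 'rV[F]_n) : 'rV[F]_n :=
  \row_(k < n) \sum_(x < n) \sum_(y < n) \sum_(z < n)
     p 0 x * q 0 y * gam x y z * (sidx z == k)%:R.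

Definition nx (x : 'I_n) : F :=
  \sum_(l : L) \sum_(s < d l) (res (fl l))^-1 * lc l (tnth B (sidx x)) s s.

Definition Jtr (p : 'rV[F]_n) : F := \sum_(x < n) p 0 x * nx x.

Definition Jstar (p : 'rV[F]_n) : 'rV[F]_n :=
  \row_(k < n) \sum_(x < n) p 0 x * (sidx x == k)%:R.
End Asymptotic.

From HB Require Import structures.
From mathcomp Require Import all_boot all_order all_algebra all_field.
Import Order.TTheory GRing.Theory Num.Theory.
Local Open Scope ring_scope.

(* Both bases are orthonormal for the form tau (x * star y), so
   A_ij = tau (b'_i * star b_j) and A A^T = 1; expanding tau through the balanced
   representations shows nu (A_ij) >= 0.  Reducing b'_i = sum_j A_ij b_j modulo m
   gives c^l(b'_i) = sum_j Abar_ij c^l(b_j).  The structure constants and the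
   values n_x of J are traces of products of the c^l, reindexed by the
   permutation x |-> x^* (which is also the involution of J), and Abar
   intertwines the two permutations.  Since Abar is orthogonal, right
   multiplication by Abar^T therefore transports all three from J to J'. *)

Set Implicit Arguments. Unset Strict Implicit. Unset Printing Implicit Defensive.

Section ScaleAddMap.
Variables (K : fieldType) (V W : lmodType K) (f : V -> W).
Hypothesis f_lin : forall k x y, f (k *: x + y) = k *: f x + f y.

Lemma lin0 : f 0 = 0.
Proof.
have := f_lin 1 0 0; rewrite scaler0 addr0 scale1r.
by move/(congr1 (fun t => t - f 0)); rewrite addrK subrr.
Qed.

Lemma linZ k x : f (k *: x) = k *: f x.
Proof. by have := f_lin k x 0; rewrite !addr0 lin0 addr0. Qed.

Lemma lin_sum (I : Type) (s : seq I) (P : pred I) (g : I -> V) :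
  f (\sum_(i <- s | P i) g i) = \sum_(i <- s | P i) f (g i).
Proof.
by apply: (big_morph f _ lin0) => x y; have := f_lin 1 x y; rewrite !scale1r.
Qed.
End ScaleAddMap.

Section ValuationTheory.
Variables (G : porderZmodType) (K F : fieldType) (nu : K -> G) (res : K -> F).
Hypotheses (hG : ordered_group G) (hnu : valuation nu) (hres : residue_map nu res).

Lemma og_leD (g g' h h' : G) : (g <= g')%O -> (h <= h')%O -> (g + h <= g' + h')%O.
Proof.
move=> le_g le_h; apply: (le_trans (hG.2 _ _ h le_g)).
by rewrite !(addrC g'); apply: hG.2.
Qed.

Lemma vge_add x y g : vge nu x g -> vge nu y g -> vge nu (x + y) g.
Proof.
move=> vx vy; have [x0|x0] := eqVneq x 0; first by rewrite x0 add0r.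
have [y0|y0] := eqVneq y 0; first by rewrite y0 addr0.
move: vx vy; rewrite /vge (negbTE x0) (negbTE y0) /= => le_x le_y.
case: (eqVneq (x + y) 0) => //= xy0.
by case/orP: (hnu.2.1 _ _ x0 y0 xy0); apply: le_trans.
Qed.

Lemma vge_sum (I : Type) (s : seq I) (P : pred I) (g : I -> K) t :
  (forall i, P i -> vge nu (g i) t) -> vge nu (\sum_(i <- s | P i) g i) t.
Proof.
move=> vg; apply: (big_ind (fun x => vge nu x t)) => //; first by rewrite /vge eqxx.
by move=> x y; apply: vge_add.
Qed.

Lemma vge_mul x y g h : vge nu x g -> vge nu y h -> vge nu (x * y) (g + h).
Proof.
have [-> _ _|x0] := eqVneq x 0; first by rewrite /vge mul0r eqxx.
have [-> _ _|y0] := eqVneq y 0; first by rewrite /vge mulr0 eqxx.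
rewrite /vge (negbTE x0) (negbTE y0) mulf_eq0 (negbTE x0) (negbTE y0) /=.
by rewrite hnu.1 //; apply: og_leD.
Qed.

Lemma vge_nu x : vge nu x (nu x).
Proof. by rewrite /vge lexx orbT. Qed.

Lemma nuV x : x != 0 -> nu x^-1 = - nu x.
Proof.
move=> x0; have nu1 : nu 1 = 0.
  have := hnu.1 1 1 (oner_neq0 _) (oner_neq0 _); rewrite mulr1.
  by move/(congr1 (fun t => t - nu 1)); rewrite addrK subrr.
by apply/esym/addr0_eq; rewrite -hnu.1 ?invr_eq0 // mulfV.
Qed.

Lemma vge_trace m (X Y : 'M[K]_m) g h :
  (forall s t, vge nu (X s t) g) -> (forall s t, vge nu (Y s t) h) ->
  vge nu (\tr (X *m Y)) (g + h).
Proof.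
move=> vX vY; apply: vge_sum => s _; rewrite mxE.
by apply: vge_sum => t _; apply: vge_mul.
Qed.

Lemma inO0 : inO nu 0.
Proof. by rewrite /inO /vge eqxx. Qed.

Lemma inOM x y : inO nu x -> inO nu y -> inO nu (x * y).
Proof. by move=> Ox Oy; have := vge_mul Ox Oy; rewrite addr0. Qed.

Lemma res0 : res 0 = 0.
Proof.
have := hres.1 0 0 inO0 inO0; rewrite addr0.
by move/(congr1 (fun t => t - res 0)); rewrite addrK subrr.
Qed.

Lemma res_sum (I : Type) (s : seq I) (P : pred I) (g : I -> K) :
  (forall i, P i -> inO nu (g i)) ->
  res (\sum_(i <- s | P i) g i) = \sum_(i <- s | P i) res (g i).
Proof.
move=> Og; suff [] : inO nu (\sum_(i <- s | P i) g i) /\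
    res (\sum_(i <- s | P i) g i) = \sum_(i <- s | P i) res (g i) by [].
apply: (big_rec2 (fun x y => inO nu x /\ res x = y)); first by rewrite inO0 res0.
move=> i y1 _ Pi [Oy1 <-]; have Ogi := Og i Pi.
by split; [apply: vge_add | rewrite hres.1].
Qed.

Lemma res_mx_orthogonal n (A : 'M[K]_n) :
  (forall i j, inO nu (A i j)) -> A *m A^T = 1%:M ->
  map_mx res A *m (map_mx res A)^T = 1%:M.
Proof.
move=> OA AAt; apply/matrixP => i j.
transitivity (res ((A *m A^T) i j)).
  rewrite !mxE res_sum => [|k _]; last by rewrite mxE; apply: inOM.
  by apply: eq_bigr => k _; rewrite !mxE hres.2.1.
by rewrite AAt !mxE; case: (i == j); [exact: hres.2.2.1 | exact: res0].
Qed.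
End ValuationTheory.

Section TraceTransport.
Variables (F : fieldType) (L : finType) (d : L -> nat) (n : nat) (r : L -> F).
Implicit Types (M : forall l, 'I_n -> 'M[F]_(d l)) (sg : 'I_n -> 'I_n) (p q : 'rV[F]_n).

Lemma mxtrace_mulmx3 m (X Y Z : 'M[F]_m) :
  \tr (X *m Y *m Z) = \sum_(s < m) \sum_(t < m) \sum_(u < m) X s t * Y t u * Z u s.
Proof.
apply: eq_bigr => s _; rewrite mxE; under eq_bigr do rewrite mxE mulr_suml.
exact: exchange_big.
Qed.

Lemma sum_delta_l (a : 'I_n) (f : 'I_n -> F) : \sum_(j < n) (a == j)%:R * f j = f a.
Proof.
rewrite (bigD1 a) //= eqxx mul1r big1 ?addr0 // => j.
by rewrite eq_sym => /negbTE ->; rewrite mul0r.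
Qed.

Definition fun_mx sg : 'M[F]_n := \matrix_(x, k) (sg x == k)%:R.

Definition mx_comb M l p : 'M[F]_(d l) := \sum_(x < n) p 0 x *: M l x.

Definition trace_prod M p q : 'rV[F]_n :=
  \row_z \sum_l r l * \tr (mx_comb M l p *m mx_comb M l q *m M l z).

Definition trace_col M sg : 'cV[F]_n := \col_x \sum_l r l * \tr (M l (sg x)).

Lemma trace_mx_comb2 M p q (Z : forall l, 'M[F]_(d l)) :
  \sum_(x < n) \sum_(y < n) p 0 x * q 0 y * \sum_l r l * \tr (M l x *m M l y *m Z l) =
  \sum_l r l * \tr (mx_comb M l p *m mx_comb M l q *m Z l).
Proof.
under eq_bigr do under eq_bigr do rewrite mulr_sumr.
under eq_bigr do rewrite exchange_big.
rewrite exchange_big; apply: eq_bigr => l _.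
rewrite /mx_comb !mulmx_suml linear_sum mulr_sumr; apply: eq_bigr => x _.
rewrite mulmx_sumr mulmx_suml linear_sum mulr_sumr; apply: eq_bigr => y _.
by rewrite -scalemxAl -scalemxAr -!scalemxAl scalerA linearZ /= mulrCA.
Qed.

Variables (Ab : 'M[F]_n) (M M' : forall l, 'I_n -> 'M[F]_(d l)) (sg sg' : 'I_n -> 'I_n).
Hypotheses (Ab_orth : Ab^T *m Ab = 1%:M) (sgK : involutive sg) (sg'K : involutive sg')
  (Ab_sg : forall k z, Ab (sg' k) z = Ab k (sg z))
  (M'E : forall l i, M' l i = \sum_(j < n) Ab i j *: M l j).

Lemma fun_mx_transport : fun_mx sg *m Ab^T = Ab^T *m fun_mx sg'.
Proof.
apply/matrixP => x k; rewrite !mxE.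
under eq_bigr do rewrite !mxE.
under [RHS]eq_bigr do rewrite !mxE (inv_eq sg'K) eq_sym mulrC.
by rewrite !sum_delta_l Ab_sg.
Qed.

Lemma mx_comb_transport l p : mx_comb M' l p = mx_comb M l (p *m Ab).
Proof.
rewrite /mx_comb; under eq_bigr do rewrite M'E scaler_sumr.
rewrite exchange_big; apply: eq_bigr => j _; rewrite mxE scaler_suml.
by apply: eq_bigr => i _; rewrite scalerA.
Qed.

Lemma trace_prod_transport p q :
  trace_prod M' (p *m Ab^T) (q *m Ab^T) = trace_prod M p q *m Ab^T.
Proof.
apply/rowP => z; rewrite !mxE.
under [RHS]eq_bigr do rewrite !mxE mulr_suml.
rewrite exchange_big; apply: eq_bigr => l _.
rewrite !mx_comb_transport -!(mulmxA _ Ab^T) Ab_orth !mulmx1.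
rewrite M'E mulmx_sumr linear_sum mulr_sumr; apply: eq_bigr => j _.
by rewrite -scalemxAr linearZ /= mulrCA mulrC.
Qed.

Lemma trace_col_transport : trace_col M' sg' = Ab *m trace_col M sg.
Proof.
apply/colP => x; rewrite !mxE.
under [RHS]eq_bigr do rewrite mxE mulr_sumr.
rewrite exchange_big; apply: eq_bigr => l _.
rewrite M'E linear_sum mulr_sumr (reindex_inj (inv_inj sgK)) /=.
by apply: eq_bigr => j _; rewrite mxtraceZ Ab_sg sgK mulrCA.
Qed.
End TraceTransport.

Arguments fun_mx {F n} sg.

Section AsymptoticCoordinates.
Variables (G : porderZmodType) (K F : fieldType) (H : falgType K) (L : finType)
  (d : L -> nat) (res : K -> F) (v : G -> K) (a : L -> G) (c : L -> K)
  (rho : forall l : L, H -> 'M[K]_(d l)) (star : H -> H) (n : nat) (B : n.-tuple H).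

Definition lc_weight l : F := (res (fl v a c l))^-1.

Definition lc_basis l (x : 'I_n) : 'M[F]_(d l) := lc res v a rho l (tnth B x).

Lemma gamE x y z :
  gam res v a c rho B x y z =
  \sum_l lc_weight l * \tr (lc_basis l x *m lc_basis l y *m lc_basis l z).
Proof.
apply: eq_bigr => l _; rewrite mxtrace_mulmx3 !mulr_sumr; apply: eq_bigr => s _.
rewrite mulr_sumr; apply: eq_bigr => t _; rewrite mulr_sumr; apply: eq_bigr => u _.
by rewrite !mulrA.
Qed.

Lemma JmulE p q :
  Jmul res v a c rho star B p q =
  trace_prod lc_weight lc_basis p q *m fun_mx (sidx star B).
Proof.
apply/rowP => k; rewrite !mxE.
under [RHS]eq_bigr do rewrite !mxE -trace_mx_comb2 mulr_suml.
under [RHS]eq_bigr do under eq_bigr do rewrite mulr_suml.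
rewrite [RHS]exchange_big; apply: eq_bigr => x _.
rewrite [RHS]exchange_big; apply: eq_bigr => y _.
by apply: eq_bigr => z _; rewrite gamE.
Qed.

Lemma JtrE p :
  Jtr res v a c rho star B p = (p *m trace_col lc_weight lc_basis (sidx star B)) 0 0.
Proof.
rewrite mxE; apply: eq_bigr => x _; rewrite !mxE; congr (_ * _).
by apply: eq_bigr => l _; rewrite mulr_sumr.
Qed.

Lemma JstarE (p : 'rV[F]_n) : Jstar star B p = p *m fun_mx (sidx star B).
Proof. by apply/rowP => k; rewrite !mxE; apply: eq_bigr => x _; rewrite mxE. Qed.
End AsymptoticCoordinates.

Section StarSymBasis.
Variables (K : fieldType) (H : falgType K) (tau : H -> K) (star : H -> H) (n : nat)
  (C : n.-tuple H).
Hypotheses (starK : involutive star) (hC : star_sym_basis tau star C).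

Lemma coord_star_sym_basis (k : 'I_n -> K) j : coord C j (\sum_(i < n) k i *: tnth C i) = k j.
Proof.
under eq_bigr do rewrite (tnth_nth 0).
by rewrite coord_sum_free // (basis_free hC.1).
Qed.

Lemma tnth_sidx i : tnth C (sidx star C i) = star (tnth C i).
Proof.
rewrite /sidx; case: pickP => [j /eqP //|no_j].
by have [j Cj] := tnthP _ _ (hC.2.1 i); have := no_j j; rewrite Cj eqxx.
Qed.

Lemma sidxK : involutive (sidx star C).
Proof.
move=> i; apply: (tuple_uniqP _ (free_uniq (basis_free hC.1))).
by rewrite !tnth_sidx starK.
Qed.
End StarSymBasis.

Section BasisChange.
Variables (G : porderZmodType) (K F : fieldType) (H : falgType K) (L : finType)
  (d : L -> nat) (nu : K -> G) (res : K -> F) (tau : H -> K) (star : H -> H)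
  (rho : forall l : L, H -> 'M[K]_(d l)) (c : L -> K) (a : L -> G) (v : G -> K)
  (n : nat) (B B' : n.-tuple H) (A : 'M[K]_n).
Hypotheses (hG : ordered_group G) (hnu : valuation nu) (hres : residue_map nu res)
  (htau : trace_form tau) (hstar : involution star) (hrho : split_semisimple_irreps rho)
  (c_neq0 : forall l, c l != 0)
  (tauE : forall h : H, tau h = \sum_(l : L) (c l)^-1 * \tr (rho l h))
  (a2E : forall l, a l *+ 2 = - nu (c l))
  (hv : vhom nu a v) (hbal : balanced nu tau star rho a)
  (hB : star_sym_basis tau star B) (hB' : star_sym_basis tau star B')
  (hA : forall i : 'I_n, tnth B' i = \sum_(j < n) A i j *: tnth B j).

Lemma basis_changeE i j : A i j = tau (tnth B' i * star (tnth B j)).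
Proof.
rewrite hA mulr_suml (lin_sum (W:=K^o) htau.1).
under eq_bigr do rewrite -scalerAl (linZ (W:=K^o) htau.1) hB.2.2.
rewrite (bigD1 j) //= eqxx big1 ?addr0 => [|m /negbTE ->]; [exact: esym (mulr1 _) | exact: mulr0].
Qed.

Lemma basis_change_orthogonal : A *m A^T = 1%:M.
Proof.
apply/matrixP => i j; rewrite !mxE -hB'.2.2 (hA j) (lin_sum hstar.1) mulr_sumr.
rewrite (lin_sum (W:=K^o) htau.1); apply: eq_bigr => k _.
by rewrite mxE (linZ hstar.1) -scalerAr (linZ (W:=K^o) htau.1) -basis_changeE mulrC.
Qed.

Lemma basis_change_integral i j : inO nu (A i j).
Proof.
rewrite /inO basis_changeE tauE; apply: (vge_sum hnu) => l _.
rewrite hrho.2.1 -(tnth_sidx hB).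
have v_cinv : vge nu (c l)^-1 (a l *+ 2) by rewrite a2E -(nuV hnu) //; apply: vge_nu.
have := vge_mul hG hnu v_cinv
  (vge_trace hG hnu (@hbal l _ _ hB' i) (@hbal l _ _ hB (sidx star B j))).
by rewrite mulr2n addrACA !subrr addr0.
Qed.

Lemma basis_change_sidx i j : A (sidx star B' i) (sidx star B j) = A i j.
Proof.
have -> : A i j = coord B (sidx star B j) (tnth B' (sidx star B' i)).
  rewrite (tnth_sidx hB') hA (lin_sum hstar.1).
  under eq_bigr do rewrite (linZ hstar.1) -(tnth_sidx hB).
  rewrite (reindex_inj (inv_inj (sidxK hstar.2.2 hB))) /=.
  under eq_bigr do rewrite (sidxK hstar.2.2 hB).
  by rewrite (coord_star_sym_basis hB) (sidxK hstar.2.2 hB).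
by rewrite hA (coord_star_sym_basis hB).
Qed.

Lemma scaled_rho_integral l (C : n.-tuple H) i s t :
  star_sym_basis tau star C -> inO nu (v (a l) * rho l (tnth C i) s t).
Proof.
move=> hC; have a_gen : in_agen a (a l).
  exists (fun l' => (l' == l)%:R).
  rewrite (bigD1 l) //= eqxx mulr1z big1 ?addr0 // => l' /negbTE ->.
  by rewrite mulr0z.
have [_ nu_va] := hv.2 _ a_gen.
have v_va : vge nu (v (a l)) (a l) by rewrite -{2}nu_va; apply: vge_nu.
by have := vge_mul hG hnu v_va (@hbal l _ _ hC i s t); rewrite subrr.
Qed.

Lemma lc_basis_change l i :
  lc_basis res v a rho B' l i = \sum_(j < n) map_mx res A i j *: lc_basis res v a rho B l j.
Proof.
have summand_integral j s t : inO nu (A i j * (v (a l) * rho l (tnth B j) s t)).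
  by apply: (inOM hG hnu); [apply: basis_change_integral | apply: scaled_rho_integral].
apply/matrixP => s t; rewrite summxE !mxE hA (lin_sum (hrho.1 l)) summxE mulr_sumr.
rewrite (res_sum hnu hres) => [|j _]; last by rewrite (linZ (hrho.1 l)) mxE mulrCA.
apply: eq_bigr => j _; rewrite !mxE (linZ (hrho.1 l)) mxE mulrCA.
by rewrite (hres.2.1 (A i j)) ?basis_change_integral ?scaled_rho_integral.
Qed.

Lemma res_basis_change_sidx k z :
  map_mx res A (sidx star B' k) z = map_mx res A k (sidx star B z).
Proof. by rewrite !mxE -{1}(sidxK hstar.2.2 hB z) basis_change_sidx. Qed.
End BasisChange.

Unset Implicit Arguments.

Theorem lemma2p2p6 (G : porderZmodType) (K F : fieldType) (H : falgType K)
  (L : finType) (d : L -> nat)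
  (nu : K -> G) (res : K -> F) (tau : H -> K) (star : H -> H)
  (rho : forall l : L, H -> 'M[K]_(d l)) (c : L -> K) (a : L -> G) (v : G -> K)
  (n : nat) (B B' : n.-tuple H) (A : 'M[K]_n) :
  ordered_group G -> valuation nu -> residue_map nu res -> formally_real F ->
  trace_form tau -> involution star -> split_semisimple_irreps rho ->
  (forall l, (0 < d l)%N) ->
  (forall l, c l != 0) ->
  (forall h : H, tau h = \sum_(l : L) (c l)^-1 * \tr (rho l h)) ->
  (forall l, a l *+ 2 = - nu (c l)) ->
  vhom nu a v ->
  balanced nu tau star rho a ->
  star_sym_basis tau star B -> star_sym_basis tau star B' ->
  (forall i : 'I_n, tnth B' i = \sum_(j < n) A i j *: tnth B j) ->
  let alpha := fun u : 'rV[F]_n => u *m (map_mx res A)^T in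
  ((A *m A^T = 1%:M) /\ (forall i j, inO nu (A i j))) /\
  (bijective alpha /\
   forall u w : 'rV[F]_n,
     alpha (Jmul res v a c rho star B u w) = Jmul res v a c rho star B' (alpha u) (alpha w)) /\
  (forall u : 'rV[F]_n,
     Jtr res v a c rho star B' (alpha u) = Jtr res v a c rho star B u) /\
  (forall u : 'rV[F]_n,
     alpha (Jstar star B u) = Jstar star B' (alpha u)).
Proof.
move=> hG hnu hres _ htau hstar hrho _ c_neq0 tauE a2E hv hbal hB hB' hA alpha.
have OA := basis_change_integral hG hnu htau hrho c_neq0 tauE a2E hbal hB hB' hA.
have AAt := basis_change_orthogonal htau hstar hB hB' hA.
pose Abar := map_mx res A.
have Abar_orth : Abar *m Abar^T = 1%:M := res_mx_orthogonal hG hnu hres OA AAt.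
have AbarT_orth : Abar^T *m Abar = 1%:M := mulmx1C Abar_orth.
have Abar_sidx := res_basis_change_sidx res hstar hB hB' hA.
have lcE := lc_basis_change hG hnu hres htau hrho c_neq0 tauE a2E hv hbal hB hB' hA.
have sidxB := sidxK hstar.2.2 hB; have sidxB' := sidxK hstar.2.2 hB'.
split=> //; split; [split|split].
- by exists (fun u => u *m Abar) => u; rewrite /alpha -mulmxA ?AbarT_orth ?Abar_orth mulmx1.
- move=> u w; rewrite /alpha !JmulE -mulmxA (fun_mx_transport sidxB' Abar_sidx).
  by rewrite mulmxA (trace_prod_transport _ AbarT_orth lcE).
- move=> u; rewrite /alpha !JtrE (trace_col_transport _ sidxB Abar_sidx lcE).
  by rewrite mulmxA -(mulmxA u) AbarT_orth mulmx1.
- by move=> u; rewrite /alpha !JstarE -mulmxA (fun_mx_transport sidxB' Abar_sidx) mulmxA.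
Qed.
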